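(* If $X$ and $Y$ are balanced words with $X\sim Y$, then $E(X)=E(Y)$.
   Context: $\mathcal{A}$ is the free associative $\mathbb{C}$-algebra on noncommuting generators $L,R$; words are finite products of these letters. A word is balanced if it contains equally many $L$'s and $R$'s. $\mathcal{J}$ is the two-sided ideal generated by $\{FG-GF : F,G \text{ nonempty balanced words}\}$ and $X\sim Y$ means $X-Y\in\mathcal{J}$. For a balanced word $W=a_1\cdots a_n$ and $0\le k\le n$, $e_k(W)=\sum_{i=1}^k\overline{a_i}$ with $\overline{R}=1$, $\overline{L}=-1$; the elevation multiset $E(W)$ is the multiset $\{e_0(W),e_1(W),\dots,e_n(W)\}$. *)

From mathcomp Require Import all_boot all_algebra complex Rstruct.
Set Implicit Arguments. Unset Strict Implicit. Unset Printing Implicit Defensive.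
Import GRing.Theory Num.Theory.

Definition CC : fieldType := (Rdefinitions.R)[i].

Definition letter := bool.
Definition Rl : letter := true.
Definition Ll : letter := false.
Definition word := seq letter.

Definition balanced (w : word) : bool := count (pred1 Rl) w == count (pred1 Ll) w.

(* Elements of the free associative algebra A = C<L,R>, represented as finite
   formal sums  sum_i c_i * w_i ; two representations denote the same element
   iff they have the same coefficient function. *)
Definition felem := seq (CC * word).
Definition coef (p : felem) (w : word) : CC := (\sum_(t <- p | t.2 == w) t.1)%R.
Definition fadd (p q : felem) : felem := p ++ q.
Definition fmul (p q : felem) : felem :=
  [seq ((a.1 * b.1)%R, a.2 ++ b.2) | a <- p, b <- q].
Definition fword (w : word) : felem := [:: (1%R, w)].
Definition fsub (p q : felem) : felem := p ++ [seq ((- t.1)%R, t.2) | t <- q].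

(* J : the two-sided ideal generated by { FG - GF : F,G nonempty balanced words }:
   the smallest subset containing the generators, 0, closed under addition and
   under left/right multiplication by arbitrary elements of A, and respecting
   equality of elements of A. *)
Inductive inJ : felem -> Prop :=
  | inJ_gen (F G : word) : F != [::] -> G != [::] -> balanced F -> balanced G ->
      inJ (fsub (fword (F ++ G)) (fword (G ++ F)))
  | inJ_zero : inJ [::]
  | inJ_add p q : inJ p -> inJ q -> inJ (fadd p q)
  | inJ_lmul a p : inJ p -> inJ (fmul a p)
  | inJ_rmul p a : inJ p -> inJ (fmul p a)
  | inJ_ext p q : (forall w, coef p w = coef q w) -> inJ p -> inJ q.

Definition simJ (X Y : felem) : Prop := inJ (fsub X Y).

Definition lbar (a : letter) : int := if a then 1%R else (-1)%R.
Definition elev (W : word) (k : nat) : int := (\sum_(a <- take k W) lbar a)%R.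
(* The elevation multiset {e_0(W), ..., e_n(W)}, as a sequence up to permutation. *)
Definition E (W : word) : seq int := [seq elev W k | k <- iota 0 (size W).+1].

From mathcomp Require Import all_boot all_algebra complex Rstruct.
From mathcomp Require Import zify.
Import GRing.Theory Num.Theory.
Open Scope ring_scope.

(* For a predicate P on words, the linear functional [mass P] sums the
   coefficients of the words satisfying P.  If P is unchanged by swapping two
   adjacent balanced factors, [mass P] kills every generator FG - GF of J, and
   since the class of such P is closed under fixing a prefix or a suffix, it
   kills all of J.  The elevation multiset gives such a P: in U F G V with F, G
   balanced, both F and G start and end at the level reached after U, so the
   swap only reorders elevations.  Taking P w := (E w is a permutation of E X),
   [mass P] (X - Y) = 1 - [P Y] must vanish, hence P Y. *)

Definition height (w : word) : int := \sum_(a <- w) lbar a.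

Lemma height_cat u v : height (u ++ v) = height u + height v.
Proof. by rewrite /height big_cat. Qed.

Lemma height_count w :
  height w = (count (pred1 Rl) w)%:Z - (count (pred1 Ll) w)%:Z.
Proof.
elim: w => [|a w IH]; first by rewrite /height big_nil.
by rewrite /height big_cons -/(height w) IH; case: a => /=; lia.
Qed.

Lemma height_balanced w : balanced w -> height w = 0.
Proof. by move/eqP=> bal; rewrite height_count bal subrr. Qed.

Lemma E_cat u v :
  E (u ++ v) = E u ++ map (fun x => height u + x) (behead (E v)).
Proof.
rewrite /E size_cat -addSn iotaD map_cat; congr (_ ++ _).
  apply/eq_in_map => k; rewrite mem_iota add0n => /andP[_ lt_k].
  by rewrite /elev takel_cat.
rewrite add0n /= -map_comp -[(size u).+1]addn1 iotaDl -map_comp.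
apply: eq_map => j /=.
by rewrite /elev take_cat ltnNge leq_addr /= addKn big_cat.
Qed.

Lemma behead_E_cat u v :
  behead (E (u ++ v)) =
  behead (E u) ++ map (fun x => height u + x) (behead (E v)).
Proof. by rewrite E_cat /E. Qed.

Lemma perm_E_swap U V F G : balanced F -> balanced G ->
  perm_eq (E (U ++ F ++ G ++ V)) (E (U ++ G ++ F ++ V)).
Proof.
move=> balF balG.
rewrite !(E_cat U) perm_cat2l; apply: perm_map.
rewrite !catA !behead_E_cat !height_cat.
rewrite !height_balanced // perm_cat2r.
by rewrite !(eq_map (@add0r _)) !map_id perm_catC.
Qed.

Definition swap_invariant (P : pred word) : Prop :=
  forall U V F G, balanced F -> balanced G ->
    P (U ++ F ++ G ++ V) = P (U ++ G ++ F ++ V).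

Lemma swap_invariant_prefix P u :
  swap_invariant P -> swap_invariant (fun w => P (u ++ w)).
Proof. by move=> invP U V F G balF balG /=; rewrite !(catA u U) invP. Qed.

Lemma swap_invariant_suffix P u :
  swap_invariant P -> swap_invariant (fun w => P (w ++ u)).
Proof. by move=> invP U V F G balF balG /=; rewrite -!catA invP. Qed.

Definition mass (P : pred word) (p : felem) : CC :=
  \sum_(t <- p) (if P t.2 then t.1 else 0).

Lemma mass_cat P p q : mass P (p ++ q) = mass P p + mass P q.
Proof. by rewrite /mass big_cat. Qed.

Lemma mass_fword P w : mass P (fword w) = (P w)%:R.
Proof. by rewrite /mass big_seq1; case: (P w). Qed.

Lemma mass_fsub P p q : mass P (fsub p q) = mass P p - mass P q.
Proof.
rewrite /fsub mass_cat /mass big_map -sumrN; congr (_ + _).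
by apply: eq_bigr => t _ /=; case: (P t.2); rewrite ?oppr0.
Qed.

Lemma mass_coef P p s : uniq s -> {subset map snd p <= s} ->
  mass P p = \sum_(w <- s | P w) coef p w.
Proof.
move=> uniq_s; elim: p => [|t p IH] sub_s.
  by rewrite /mass big_nil big1 // => w _; rewrite /coef big_nil.
have t_s : t.2 \in s by apply: sub_s; rewrite inE eqxx.
rewrite /mass big_cons -/(mass P p) IH; last first.
  by move=> w w_p; apply: sub_s; rewrite inE w_p orbT.
have -> : \sum_(w <- s | P w) coef (t :: p) w =
          \sum_(w <- s | P w) ((if t.2 == w then t.1 else 0) + coef p w).
  by apply: eq_bigr => w _; rewrite /coef big_cons; case: ifP; rewrite ?add0r.
rewrite big_split /=; congr (_ + _).
rewrite big_mkcond (bigD1_seq t.2) //= eqxx big1 ?addr0 //.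
by move=> w /negbTE; rewrite eq_sym => ->; case: (P w).
Qed.

Lemma eq_mass P p q : (forall w, coef p w = coef q w) -> mass P p = mass P q.
Proof.
move=> eq_coef; set s := undup (map snd (p ++ q)).
have sub_p : {subset map snd p <= s}.
  by move=> w; rewrite mem_undup map_cat mem_cat => ->.
have sub_q : {subset map snd q <= s}.
  by move=> w; rewrite mem_undup map_cat mem_cat orbC => ->.
rewrite (mass_coef P _ _ (undup_uniq _) sub_p) (mass_coef P _ _ (undup_uniq _) sub_q).
by apply: eq_bigr => w _; rewrite eq_coef.
Qed.

Lemma mass_fmull P a p :
  mass P (fmul a p) = \sum_(x <- a) x.1 * mass (fun w => P (x.2 ++ w)) p.
Proof.
elim: a => [|x a IH]; first by rewrite /mass /fmul !big_nil.
rewrite /fmul allpairs_cons -/(fmul a p) mass_cat IH big_cons; congr (_ + _).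
rewrite /mass big_map mulr_sumr; apply: eq_bigr => y _ /=.
by case: ifP; rewrite ?mulr0.
Qed.

Lemma mass_fmulr P p a :
  mass P (fmul p a) = \sum_(y <- a) y.1 * mass (fun w => P (w ++ y.2)) p.
Proof.
have -> : mass P (fmul p a) =
    \sum_(x <- p) \sum_(y <- a) (if P (x.2 ++ y.2) then x.1 * y.1 else 0).
  elim: p => [|x p IH]; first by rewrite /mass /fmul !big_nil.
  rewrite /fmul allpairs_cons -/(fmul p a) mass_cat IH big_cons.
  by rewrite /mass big_map.
rewrite exchange_big /=; apply: eq_bigr => y _.
rewrite /mass mulr_sumr; apply: eq_bigr => x _.
by case: ifP; rewrite ?mulr0 // mulrC.
Qed.

Lemma mass_inJ p P : inJ p -> swap_invariant P -> mass P p = 0.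
Proof.
move=> J_p; elim: J_p P => {p}.
- move=> F G _ _ balF balG P invP.
  rewrite mass_fsub !mass_fword.
  by have := invP [::] [::] F G balF balG; rewrite /= !cats0 => ->; rewrite subrr.
- by move=> P _; rewrite /mass big_nil.
- by move=> p q _ IHp _ IHq P invP; rewrite /fadd mass_cat IHp // IHq // addr0.
- move=> a p _ IHp P invP; rewrite mass_fmull big1 // => x _.
  by rewrite IHp ?mulr0 //; apply: swap_invariant_prefix.
- move=> p a _ IHp P invP; rewrite mass_fmulr big1 // => y _.
  by rewrite IHp ?mulr0 //; apply: swap_invariant_suffix.
- by move=> p q eq_coef _ IHp P invP; rewrite -(eq_mass P _ _ eq_coef) IHp.
Qed.

Theorem lemma4p4 (X Y : word) :
  balanced X -> balanced Y -> simJ (fword X) (fword Y) -> perm_eq (E X) (E Y).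
Proof.
move=> _ _ XsimY.
pose P w := perm_eq (E w) (E X).
have invP : swap_invariant P.
  move=> U V F G balF balG; rewrite /P.
  exact: (permPl (perm_E_swap U V F G balF balG)).
have := mass_inJ _ _ XsimY invP.
rewrite mass_fsub !mass_fword /P perm_refl perm_sym.
by case: (perm_eq _ _) => // /eqP; rewrite subr0 oner_eq0.
Qed.
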